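(* Let $\mathcal{I}=\{(i\mid A_i): i\in[m]\}$ be an index coding instance. Then $$\beta(\mathcal{I})\le \beta_{\text{P-UMCD}}(\mathcal{I}):=\min\sum_{j\in[n]}\beta_{\text{UMCD}}(M_j),$$ where the minimum is over all partitions of $[m]$ into pairwise disjoint nonempty sets $M_1,\dots,M_n$ ($n\le m$) with $M_1\cup\dots\cup M_n=[m]$.
   Context: Index coding: a server holds messages $x_i=(x_i^1,\dots,x_i^t)\in\mathbb{F}_q^t$, $i\in[m]$; receiver $i$ wants $x_i$ and knows $\{x_j: j\in A_i\}$ where $A_i\subseteq[m]\setminus\{i\}$. A $(t,r)$ index code consists of an encoding map $\phi:\mathbb{F}_q^{mt}\to\mathbb{F}_q^{r}$ and decoders $\psi_i:\mathbb{F}_q^r\times\mathbb{F}_q^{|A_i|t}\to\mathbb{F}_q^t$ with $\psi_i(\phi(x),(x_j)_{j\in A_i})=x_i$ for all messages and all $i$; its rate is $r/t$, and $\beta(\mathcal{I})$ is the infimum of $r/t$ over all $t$ and all $(t,r)$ index codes (over finite fields). For $M\subseteq[m]$, the subinstance $M$ is the instance with receiver set $M$ and side information $A_i\cap M$. $B_i=[m]\setminus(A_i\cup\{i\})$ (within a subinstance, relative to $M$). For a $0/1$ matrix $\boldsymbol{G}$, $\boldsymbol{G}_{[k]}^L$ is the submatrix of its first $k$ rows and columns in $L$; $\mathrm{mcm}(\boldsymbol{G})$ is the maximum number of $1$-entries no two in a common row or column (0 if no columns). UMCD algorithm on an instance: $N=$ all receivers, $k=0$; while $N\ne\emptyset$: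 $k\leftarrow k+1$; pick $w\in N$ minimizing $|A_w|$ over $N$ (arbitrary tie-breaking); set row $k$ of $\boldsymbol{G}$ to the indicator of $\{w\}\cup A_w$; remove $w$ from $N$; remove every $i\in N$ with $\mathrm{mcm}(\boldsymbol{G}_{[k]}^{\{i\}\cup B_i})=\mathrm{mcm}(\boldsymbol{G}_{[k]}^{B_i})+1$; output $\beta_{\text{UMCD}}=k$. $\beta_{\text{UMCD}}(M)$ is the output of (a fixed execution of) this algorithm on subinstance $M$. *)

From HB Require Import structures.
From mathcomp Require Import all_boot all_order all_algebra.
From mathcomp Require Import classical_sets reals.
Unset Strict Implicit. Unset Printing Implicit Defensive.
Import Order.TTheory GRing.Theory Num.Theory.

Section IndexCoding.
Variable m : nat.
(* An index coding instance: receiver i wants x_i and knows {x_j : j \in A i}. *)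
Variable A : 'I_m -> {set 'I_m}.

Definition has_index_code (F : finFieldType) (t r : nat) : Prop :=
  exists (phi : ('I_m -> 'rV[F]_t) -> 'rV[F]_r)
         (psi : forall i : 'I_m,
                  'rV[F]_r -> ({j : 'I_m | j \in A i} -> 'rV[F]_t) -> 'rV[F]_t),
    forall (x : 'I_m -> 'rV[F]_t) (i : 'I_m),
      psi i (phi x) (fun j => x (val j)) = x i.

Definition beta (R : realType) : R :=
  inf [set x : R | exists (F : finFieldType) (t r : nat),
        [/\ (0 < t)%N, has_index_code F t r & x = (r%:R / t%:R)%R]].

Definition Bset (M : {set 'I_m}) (i : 'I_m) : {set 'I_m} :=
  M :\: (i |: A i).

(* Row j of G (for the run s = picked receivers w_1 .. w_k): the indicator
   of {w_j} u (A_{w_j} n M), as a set of columns. *)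
Definition Grow (M : {set 'I_m}) (s : seq 'I_m) (j : 'I_(size s)) : {set 'I_m} :=
  let w := tnth (in_tuple s) j in w |: (A w :&: M).

Definition is_mcm_set (M : {set 'I_m}) (s : seq 'I_m) (L : {set 'I_m})
    (S : {set 'I_(size s) * 'I_m}) : bool :=
  [forall p in S, (p.2 \in L) && (p.2 \in @Grow M s p.1)] &&
  [forall p in S, forall q in S, (p != q) ==> (p.1 != q.1) && (p.2 != q.2)].

Definition mcm (M : {set 'I_m}) (s : seq 'I_m) (L : {set 'I_m}) : nat :=
  \max_(S : {set 'I_(size s) * 'I_m} | is_mcm_set M s L S) #|S|.

(* Receivers removed after adding the row of w (s already contains w). *)
Definition umcd_remaining (M N : {set 'I_m}) (s : seq 'I_m) (w : 'I_m)
  : {set 'I_m} :=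
  [set i in N :\ w | mcm M s (i |: Bset M i) != (mcm M s (Bset M i)).+1].

(* umcd_from M N s k : from state (N, rows s) some execution of the
   algorithm (arbitrary tie-breaking) terminates with output k. *)
Inductive umcd_from (M : {set 'I_m}) : {set 'I_m} -> seq 'I_m -> nat -> Prop :=
| umcd_done (s : seq 'I_m) : umcd_from M (finset.set0 : {set 'I_m}) s (size s)
| umcd_step (N : {set 'I_m}) (s : seq 'I_m) (w : 'I_m) (k : nat) :
    w \in N ->
    (forall v, v \in N -> #|A w :&: M| <= #|A v :&: M|)%N ->
    umcd_from M (umcd_remaining M N (rcons s w) w) (rcons s w) k ->
    umcd_from M N s k.

Definition umcd_run (M : {set 'I_m}) (k : nat) : Prop := umcd_from M M [::] k.

Definition singleton_partition : {set {set 'I_m}} := [set [set i] | i : 'I_m].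

Definition pumcd (exec : {set 'I_m} -> nat) : nat :=
  let P := [arg min_(P < singleton_partition | finset.partition P [set: 'I_m])
              (\sum_(M in P) exec M)%N] in
  (\sum_(M in P) exec M)%N.

End IndexCoding.

From HB Require Import structures.
From mathcomp Require Import all_boot all_order all_algebra.
From mathcomp Require Import classical_sets reals.
Import Order.TTheory GRing.Theory Num.Theory.
From mathcomp Require Import fingroup perm.

Set Implicit Arguments.
Unset Strict Implicit.
Unset Printing Implicit Defensive.

(* A run of UMCD on a block M with rows w_1 .. w_k gives a k x m 0/1 pattern.
   Over a large prime field we fill this pattern with values making every
   minor supported on a partial matching of the pattern nonzero.  For such a
   matrix G, a column i is outside the span of the columns B as soon as adding
   i raises the matching number of some set of rows: expanding a maximum minor
   along column i expresses it through minors with all columns in B, which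
   vanish.  UMCD removes a receiver exactly when this happens for its current
   rows, so x |-> G x is a scalar linear index code for the block of length k.
   Stacking the codes of the blocks of an optimal partition bounds beta. *)

Lemma sum_bits_lt N (f : nat -> bool) : \sum_(i < N) f i * 2 ^ i < 2 ^ N.
Proof.
elim: N => [|N IH]; first by rewrite big_ord0.
rewrite big_ord_recr /= expnS mul2n -addnn.
apply: leq_trans (_ : 2 ^ N + f N * 2 ^ N <= _); first by rewrite ltn_add2r.
by rewrite leq_add2l; case: (f N); rewrite ?mul1n ?mul0n.
Qed.

Lemma sum_bits_inj N (f g : nat -> bool) :
  \sum_(i < N) f i * 2 ^ i = \sum_(i < N) g i * 2 ^ i ->
  forall i, i < N -> f i = g i.
Proof.
elim: N => [|N IH] //; rewrite !big_ord_recr /=.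
have top : \sum_(i < N) f i * 2 ^ i + f N * 2 ^ N =
           \sum_(i < N) g i * 2 ^ i + g N * 2 ^ N -> f N = g N.
  move: (sum_bits_lt N f) (sum_bits_lt N g).
  case: (f N); case: (g N); rewrite //= ?mul1n ?mul0n ?addn0 => ltf ltg E.
    by move: ltg; rewrite -E ltnNge leq_addl.
  by move: ltf; rewrite E ltnNge leq_addl.
move=> E; have topE := top E; move: E; rewrite topE => /addIn E i.
by rewrite ltnS leq_eqVlt => /predU1P [-> //|]; apply: IH.
Qed.

Lemma eq_sum_exp2 (s t : seq nat) :
  uniq s -> uniq t -> \sum_(i <- s) 2 ^ i = \sum_(i <- t) 2 ^ i -> s =i t.
Proof.
move=> s_uniq t_uniq E; pose N := (\max_(i <- s ++ t) i).+1.
have ltN i : i \in s ++ t -> i < N by move=> st; rewrite ltnS (leq_bigmax_seq i).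
have bits u : uniq u -> {subset u <= s ++ t} ->
    \sum_(i <- u) 2 ^ i = \sum_(i < N) ((i : nat) \in u) * 2 ^ i.
  move=> u_uniq sub_u; transitivity (\sum_(0 <= i < N | i \in u) 2 ^ i).
    rewrite -[RHS]big_filter; apply/perm_big/uniq_perm; rewrite ?filter_uniq ?iota_uniq //.
    move=> i; rewrite mem_filter mem_iota add0n /=.
    by case: (boolP (i \in u)) => //= /sub_u /ltN ->.
  rewrite big_mkcond big_mkord; apply: eq_bigr => i _.
  by case: (_ \in u); rewrite ?mul1n ?mul0n.
have sub_s : {subset s <= s ++ t} by move=> i; rewrite mem_cat => ->.
have sub_t : {subset t <= s ++ t} by move=> i; rewrite mem_cat orbC => ->.
move: E; rewrite (bits s) // (bits t) // => /sum_bits_inj bitsE i.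
case: (ltnP i N) => [/bitsE //|geN].
by apply/idP/idP => [/sub_s|/sub_t] /ltN; rewrite ltnNge geN.
Qed.

Section PatternMatching.
Variables (k m : nat) (P : 'I_k -> 'I_m -> bool).

Definition pmatching (S : {set 'I_k * 'I_m}) : bool :=
  [forall p in S, P p.1 p.2] &&
  [forall p in S, forall q in S, (p != q) ==> (p.1 != q.1) && (p.2 != q.2)].

Definition pmatching_on (Rw : pred 'I_k) (L : {set 'I_m})
    (S : {set 'I_k * 'I_m}) : bool :=
  pmatching S && [forall p in S, Rw p.1 && (p.2 \in L)].

Definition pmcm (Rw : pred 'I_k) (L : {set 'I_m}) : nat :=
  \max_(S | pmatching_on Rw L S) #|S|.

Lemma pmcm_witness Rw L : exists2 S, pmatching_on Rw L S & #|S| = pmcm Rw L.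
Proof.
have set0_on : pmatching_on Rw L finset.set0.
  rewrite /pmatching_on /pmatching -andbA.
  by apply/and3P; split; apply/forall_inP => p; rewrite inE.
have [|S S_on maxS] := @eq_bigmax_cond _ (pmatching_on Rw L) (fun S => #|S|).
  by apply/card_gt0P; exists finset.set0.
by exists S; rewrite // -maxS.
Qed.

Definition match_row (S : {set 'I_k * 'I_m}) (a : 'I_#|S|) : 'I_k := (enum_val a).1.
Definition match_col (S : {set 'I_k * 'I_m}) (a : 'I_#|S|) : 'I_m := (enum_val a).2.
Arguments match_row : clear implicits.
Arguments match_col : clear implicits.

Lemma match_mem S a : (match_row S a, match_col S a) \in S.
Proof. by rewrite -surjective_pairing enum_valP. Qed.

Lemma match_surj (S : {set 'I_k * 'I_m}) p :
  p \in S -> exists a, (match_row S a, match_col S a) = p.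
Proof.
by move=> pS; exists (enum_rank_in pS p); rewrite -surjective_pairing enum_rankK_in.
Qed.

Lemma match_pattern S a : pmatching S -> P (match_row S a) (match_col S a).
Proof. by case/andP=> /forall_inP/(_ _ (match_mem a)). Qed.

Lemma match_onP Rw L S a : pmatching_on Rw L S ->
  Rw (match_row S a) && (match_col S a \in L).
Proof. by case/andP=> _ /forall_inP/(_ _ (match_mem a)). Qed.

Lemma match_distinct S a b : pmatching S -> a != b ->
  (match_row S a != match_row S b) && (match_col S a != match_col S b).
Proof.
case/andP=> _ /forall_inP/(_ _ (enum_valP a))/forall_inP/(_ _ (enum_valP b)).
by rewrite (inj_eq enum_val_inj) => /implyP.
Qed.

Lemma match_row_inj S : pmatching S -> injective (match_row S).
Proof.
move=> S_match a b; apply: contra_eq => /(match_distinct S_match).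
by case/andP.
Qed.

Lemma match_col_inj S : pmatching S -> injective (match_col S).
Proof.
move=> S_match a b; apply: contra_eq => /(match_distinct S_match).
by case/andP.
Qed.

Definition minor (R : Type) (G : 'M[R]_(k, m)) (S : {set 'I_k * 'I_m}) : 'M[R]_#|S| :=
  \matrix_(a, b) G (match_row S a) (match_col S b).

Lemma det_neq0_pmatching (R : idomainType) (G : 'M[R]_(k, m)) n
    (rho : 'I_n -> 'I_k) (gam : 'I_n -> 'I_m) :
  (forall r c, ~~ P r c -> G r c = 0%R) -> injective rho ->
  (\det (\matrix_(a, b) G (rho a) (gam b)) != 0)%R ->
  exists2 T, pmatching T &
    #|T| = n /\ forall p, p \in T -> exists a b, p = (rho a, gam b).
Proof.
move=> G_pattern rho_inj detG.
have gam_inj : injective gam.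
  move=> b1 b2 gam_b; apply: contraTeq detG => b12; rewrite negbK -det_tr.
  by apply/eqP/(determinant_alternate b12) => a; rewrite !mxE gam_b.
have [s s_term] : exists s : 'S_n, (\prod_a G (rho a) (gam (s a)) != 0)%R.
  apply/existsP; apply: contraTT detG; rewrite negb_exists negbK => /forallP s_term.
  apply/eqP; rewrite /determinant big1 // => s _.
  under eq_bigr do rewrite mxE.
  by move: (s_term s); rewrite negbK => /eqP ->; rewrite mulr0.
have e_inj : injective (fun a => (rho a, gam (s a))) by move=> a b [/rho_inj].
exists [set (rho a, gam (s a)) | a : 'I_n]; last first.
  split; first by rewrite card_imset // card_ord.
  by move=> p /imsetP [a _ ->]; exists a, (s a).
apply/andP; split; apply/forall_inP => p /imsetP [a _ ->] /=.
  apply: contraTT s_term => /G_pattern G0.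
  by rewrite negbK (bigD1 a) //= G0 mul0r.
apply/forall_inP => q /imsetP [b _ ->] /=; apply/implyP => ab.
have {}ab : a != b by apply: contraNneq ab => ->.
by rewrite (inj_eq rho_inj) (inj_eq gam_inj) (inj_eq perm_inj) ab.
Qed.

End PatternMatching.

Arguments match_row {k m} S a.
Arguments match_col {k m} S a.

Lemma forall_in_imset (T U : finType) (f : T -> U) (A : {set T}) (p : pred U) :
  [forall y in f @: A, p y] = [forall x in A, p (f x)].
Proof.
apply/forall_inP/forall_inP => [p_img x xA | p_A _ /imsetP [x xA ->]].
  exact/p_img/imset_f.
exact: p_A.
Qed.

Lemma pmcm_widen k1 k2 m (le_k12 : k1 <= k2) (P1 : 'I_k1 -> 'I_m -> bool)
    (P2 : 'I_k2 -> 'I_m -> bool) (L : {set 'I_m}) :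
  (forall r c, P1 r c = P2 (widen_ord le_k12 r) c) ->
  pmcm P1 predT L = pmcm P2 (fun r => r < k1) L.
Proof.
move=> P12; pose f (p : 'I_k1 * 'I_m) := (widen_ord le_k12 p.1, p.2).
have widen_inj : injective (widen_ord le_k12) by move=> r1 r2 [] /val_inj.
have f_inj : injective f by move=> [r1 c1] [r2 c2] [/val_inj -> ->].
have f_on (S : {set 'I_k1 * 'I_m}) :
    pmatching_on P2 (fun r => r < k1) L (f @: S) = pmatching_on P1 predT L S.
  rewrite /pmatching_on /pmatching !forall_in_imset /=; congr (_ && _ && _).
  - by apply: eq_forallb_in => p _; rewrite P12.
  - apply: eq_forallb_in => p _; rewrite forall_in_imset; apply: eq_forallb_in => q _.
    by rewrite (inj_eq f_inj) (inj_eq widen_inj).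
  - by apply: eq_forallb_in => p _; rewrite ltn_ord.
apply/eqP; rewrite eqn_leq; apply/andP; split.
  have [S S_on <-] := pmcm_witness P1 predT L.
  by rewrite -(card_imset _ f_inj); apply: leq_bigmax_cond; rewrite f_on.
have [T T_on <-] := pmcm_witness P2 (fun r => r < k1) L.
have T_img : T = f @: (f @^-1: T).
  apply/setP => p; apply/idP/imsetP => [pT | [q]]; last by rewrite inE => fq ->.
  have /andP [_ /forall_inP /(_ p pT) /andP [ltp _]] := T_on.
  have fp : f (Ordinal ltp, p.2) = p.
    by rewrite /f [RHS]surjective_pairing; congr (_, _); apply: val_inj.
  by exists (Ordinal ltp, p.2); rewrite ?inE fp.
rewrite T_img card_imset //; apply: leq_bigmax_cond; rewrite -f_on -T_img //.
Qed.

Section GenericPolyMatrix.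
Local Open Scope ring_scope.
Variables (F : fieldType) (k m : nat) (P : 'I_k -> 'I_m -> bool).

(* The entry at position p is X^(2^p): distinct permutations of a matching
   minor then produce distinct exponents (binary expansion), so the diagonal
   monomial cannot cancel. *)
Definition generic_polymx : 'M[{poly F}]_(k, m) :=
  \matrix_(r, c) if P r c then 'X^(2 ^ enum_rank (r, c)) else 0.

Definition perm_weight (S : {set 'I_k * 'I_m}) (s : 'S_#|S|) : nat :=
  (\sum_a 2 ^ enum_rank (match_row S a, match_col S (s a)))%N.

Definition perm_on_pattern (S : {set 'I_k * 'I_m}) (s : 'S_#|S|) : bool :=
  [forall a, P (match_row S a) (match_col S (s a))].

Arguments perm_weight : clear implicits.
Arguments perm_on_pattern : clear implicits.

Lemma coef_det_minor_polymx S n :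
  (\det (minor generic_polymx S))`_n =
  \sum_(s : 'S_#|S|) (perm_on_pattern S s && (perm_weight S s == n))%:R * (-1) ^+ s.
Proof.
rewrite /determinant coef_sum; apply: eq_bigr => s _.
have -> : \prod_a minor generic_polymx S a (s a) =
    if perm_on_pattern S s then 'X^(perm_weight S s) else 0.
  case: ifP => [/forallP on_P | /negbT].
    by rewrite -prodrXr; apply: eq_bigr => a _; rewrite !mxE on_P.
  rewrite negb_forall => /existsP [a off_P].
  by rewrite (bigD1 a) //= !mxE (negbTE off_P) mul0r.
case: ifP => _; last by rewrite mulr0 coef0 mul0r.
by case: (odd_perm s); rewrite ?mul1r ?mulr1 ?mulN1r ?mulrN1 ?coefN coefXn eq_sym.
Qed.

Lemma perm_weight_eq1 (S : {set 'I_k * 'I_m}) (s : 'S_#|S|) :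
  pmatching P S -> perm_weight S s = perm_weight S 1 -> s = 1%g.
Proof.
move=> S_match eq_weight.
pose code (t : 'S_#|S|) a : nat := enum_rank (match_row S a, match_col S (t a)).
have code_inj t : injective (code t).
  by move=> a b /val_inj/enum_rank_inj [/(match_row_inj S_match)].
have weightE t : perm_weight S t = (\sum_(c <- map (code t) (enum 'I_#|S|)) 2 ^ c)%N.
  by rewrite big_map big_enum.
have codes_eq : map (code s) (enum 'I_#|S|) =i map (code 1%g) (enum 'I_#|S|).
  by apply: eq_sum_exp2; rewrite ?(map_inj_uniq (code_inj _)) ?enum_uniq // -!weightE.
apply/permP => a; rewrite perm1.
have /mapP [b _] : code s a \in map (code 1%g) (enum 'I_#|S|).
  by rewrite -codes_eq map_f ?mem_enum.
move=> /val_inj/enum_rank_inj [/(match_row_inj S_match) <-].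
by rewrite perm1 => /(match_col_inj S_match).
Qed.

Lemma det_minor_polymx_neq0 (S : {set 'I_k * 'I_m}) :
  pmatching P S -> \det (minor generic_polymx S) != 0.
Proof.
move=> S_match; apply/eqP => /(congr1 (fun p : {poly F} => p`_(perm_weight S 1))).
rewrite coef_det_minor_polymx coef0 (bigD1 1%g) //= big1 => [|s s_neq1].
  have -> : perm_on_pattern S 1.
    by apply/forallP => a; rewrite perm1 match_pattern.
  by rewrite eqxx odd_perm1 mulr1 addr0 => /eqP; rewrite oner_eq0.
case: (perm_weight S s =P perm_weight S 1) => [/(perm_weight_eq1 S_match) s1|_].
  by rewrite s1 eqxx in s_neq1.
by rewrite andbF mul0r.
Qed.

Lemma size_det_minor_polymx S :
  (size (\det (minor generic_polymx S)) <=
     (#|{: 'I_k * 'I_m}| * 2 ^ #|{: 'I_k * 'I_m}|).+1)%N.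
Proof.
apply/leq_sizeP => j le_j; rewrite coef_det_minor_polymx big1 // => s _.
suff /ltn_eqF -> : (perm_weight S s < j)%N by rewrite andbF mul0r.
apply: leq_trans le_j; rewrite ltnS /perm_weight.
apply: leq_trans (_ : \sum_(a < #|S|) 2 ^ #|{: 'I_k * 'I_m}| <= _)%N.
  by apply: leq_sum => a _; rewrite leq_exp2l // ltnW.
by rewrite sum_nat_const card_ord leq_mul2r max_card orbT.
Qed.

End GenericPolyMatrix.

(* One more than (number of minors) * (bound on their sizes), which bounds
   the size of the product of all matching minors of [generic_polymx]. *)
Definition generic_bound (k m : nat) : nat :=
  (#|{: {set 'I_k * 'I_m}}| * (#|{: 'I_k * 'I_m}| * 2 ^ #|{: 'I_k * 'I_m}|).+1).+1.

Lemma generic_matrix_exists (F : finFieldType) k m (P : 'I_k -> 'I_m -> bool) :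
  generic_bound k m < #|F| ->
  exists G : 'M[F]_(k, m), (forall r c, ~~ P r c -> G r c = 0%R) /\
    forall S, pmatching P S -> (\det (minor G S) != 0)%R.
Proof.
move=> F_large; pose GX := generic_polymx F P.
pose Q := (\prod_(S | pmatching P S) \det (minor GX S))%R.
have Q_neq0 : Q != 0%R.
  rewrite prodf_seq_neq0; apply/allP => S _; apply/implyP.
  exact: det_minor_polymx_neq0.
have size_Q : size Q <= generic_bound k m.
  apply: leq_trans (size_poly_prod_leq _ _) _; apply: leq_trans (leq_subr _ _) _.
  rewrite ltnS -sum_nat_const.
  rewrite [X in _ <= X](bigID (pmatching P)) /=; apply: leq_trans (leq_addr _ _).
  by apply: leq_sum => S _; apply: size_det_minor_polymx.
have [x Qx] : exists x, ~~ root Q x.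
  case: (pickP (fun x => ~~ root Q x)) => [x|roots]; first by exists x.
  have := max_poly_roots Q_neq0 (rs := enum F); rewrite enum_uniq -cardE.
  have -> : all (root Q) (enum F) by apply/allP => x _; move/negbFE: (roots x).
  move=> /(_ isT isT) F_small.
  by move: (leq_trans F_small size_Q); rewrite ltnNge (ltnW F_large).
exists (map_mx (horner_eval x) GX); split=> [r c off_P | S S_match].
  by rewrite !mxE (negbTE off_P) /horner_eval horner0.
have -> : minor (map_mx (horner_eval x) GX) S = map_mx (horner_eval x) (minor GX S).
  by apply/matrixP => a b; rewrite !mxE.
rewrite det_map_mx; move: Qx; rewrite /root horner_prod prodf_seq_neq0.
by move=> /allP/(_ S (mem_index_enum S)); rewrite S_match.
Qed.

Section KernelRow.
Local Open Scope ring_scope.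
Variables (R : pzRingType) (k m : nat) (G : 'M[R]_(k, m)).

Lemma kernel_row_relation (d : 'cV[R]_m) (i : 'I_m) (B : {set 'I_m}) :
  i \notin B -> G *m d = 0 -> (forall j, j \notin i |: B -> d j 0 = 0) ->
  forall r, G r i * d i 0 = - \sum_(b in B) G r b * d b 0.
Proof.
move=> iNB Gd0 d_supp r.
have split_row : \sum_c G r c * d c 0 = G r i * d i 0 + \sum_(b in B) G r b * d b 0.
  rewrite (bigD1 i) //=; congr (_ + _); rewrite big_mkcond [RHS]big_mkcond.
  apply: eq_bigr => c _ /=; case: (boolP (c \in B)) => cB.
    by rewrite (memPn iNB c cB).
  case: eqP => [-> // | c_neq_i]; rewrite d_supp ?mulr0 // in_setU1 negb_or cB andbT.
  exact/eqP.
apply/eqP; rewrite -addr_eq0 -split_row.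
by have := congr1 (fun v : 'cV[R]_k => v r 0) Gd0; rewrite !mxE => ->.
Qed.

End KernelRow.

Section GenericKernel.
Local Open Scope ring_scope.
Variables (R : idomainType) (k m : nat) (P : 'I_k -> 'I_m -> bool).
Variable G : 'M[R]_(k, m).
Hypothesis G_pattern : forall r c, ~~ P r c -> G r c = 0.
Hypothesis G_generic : forall S, pmatching P S -> \det (minor G S) != 0.

Lemma generic_kernel_coord_eq0 (Rw : pred 'I_k) (i : 'I_m) (B : {set 'I_m}) :
  i \notin B -> (pmcm P Rw B < pmcm P Rw (i |: B))%N ->
  forall d : 'cV[R]_m, G *m d = 0 ->
    (forall j, j \notin i |: B -> d j 0 = 0) -> d i 0 = 0.
Proof.
move=> iNB gain d Gd0 d_supp.
have [S S_on cardS] := pmcm_witness P Rw (i |: B).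
have S_match : pmatching P S by case/andP: S_on.
have too_big T : pmatching_on P Rw B T -> #|T| = #|S| -> False.
  by move=> T_on cardT; move: gain; rewrite -cardS -cardT ltnNge leq_bigmax_cond.
have [c0 col_c0] : exists c0, match_col S c0 = i.
  case: (pickP (fun c => match_col S c == i)) => [c /eqP | col_neq_i]; first by exists c.
  exfalso; apply: (too_big S) => //.
  rewrite /pmatching_on S_match /=; apply/forall_inP => p pS.
  have [a <- /=] := match_surj pS.
  have /andP [-> /setU1P [/eqP|//]] := match_onP a S_on.
  by rewrite col_neq_i.
pose col b c := if c == c0 then b else match_col S c.
pose Q b := \matrix_(a, c) G (match_row S a) (col b c).
have row_relation := kernel_row_relation iNB Gd0 d_supp.
have det_expand : d i 0 * \det (minor G S) = - \sum_(b in B) d b 0 * \det (Q b).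
  rewrite (expand_det_col _ c0) mulr_sumr.
  under eq_bigr => a _ do
    rewrite mxE col_c0 mulrA [d i 0 * _]mulrC row_relation mulNr mulr_suml.
  rewrite sumrN exchange_big /=; congr (- _); apply: eq_bigr => b _.
  rewrite (expand_det_col _ c0) mulr_sumr; apply: eq_bigr => a _.
  rewrite !mxE /col eqxx [G _ b * _]mulrC -mulrA; congr (_ * (_ * _)).
  rewrite /cofactor; congr (_ * \det _); apply/matrixP => x y.
  by rewrite !mxE /col eq_sym (negbTE (neq_lift c0 y)).
have detQ0 b : b \in B -> \det (Q b) = 0.
  move=> bB; apply/eqP; apply: contraT.
  case/(det_neq0_pmatching G_pattern (match_row_inj S_match)) => T T_match [cardT T_sub].
  exfalso; apply: (too_big T) => //.
  rewrite /pmatching_on T_match; apply/forall_inP => p /T_sub [a [c ->]] /=.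
  have /andP [-> _] := match_onP a S_on; rewrite /col.
  case: eqP => [// | /eqP c_neq_c0].
  move: (match_onP c S_on) => /andP [_]; rewrite in_setU1 -col_c0.
  by rewrite (inj_eq (match_col_inj S_match)) (negbTE c_neq_c0).
move: det_expand; rewrite big1 => [|b bB]; last by rewrite detQ0 ?mulr0.
by rewrite oppr0 => /eqP; rewrite mulf_eq0 (negbTE (G_generic S_match)) orbF => /eqP.
Qed.

End GenericKernel.

Section Umcd.
Variables (m : nat) (A : 'I_m -> {set 'I_m}).

Definition umcd_pattern (M : {set 'I_m}) (s : seq 'I_m) (r : 'I_(size s)) (c : 'I_m) :
    bool :=
  c \in Grow m A M s r.
Arguments umcd_pattern : clear implicits.

Lemma mcm_pattern M s L : mcm m A M s L = pmcm (umcd_pattern M s) predT L.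
Proof.
apply: eq_bigl => S; rewrite /is_mcm_set /pmatching_on /pmatching /=.
apply/idP/idP => [/andP [/forall_inP on_LP pair] |
                  /andP [/andP [/forall_inP onP ->] /forall_inP onL]].
  rewrite pair andbT; apply/andP; split; apply/forall_inP => p /on_LP /andP [] //.
rewrite andbT; apply/forall_inP => p pS.
by have := onL p pS; have := onP p pS; rewrite /umcd_pattern /= => -> ->.
Qed.

Lemma mcm_cat M s t L :
  mcm m A M s L = pmcm (umcd_pattern M (s ++ t)) (fun r => r < size s) L.
Proof.
have le_s : size s <= size (s ++ t) by rewrite size_cat leq_addr.
rewrite mcm_pattern (@pmcm_widen _ _ _ le_s _ (umcd_pattern M (s ++ t))) // => r c.
by rewrite /umcd_pattern /Grow !(tnth_nth c) /= nth_cat ltn_ord.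
Qed.

(* Why UMCD removed receiver i: it was picked as a row, or the removal test
   mcm(G_[k]^{i u B_i}) = mcm(G_[k]^{B_i}) + 1 held for the first k rows s0. *)
Definition served (M : {set 'I_m}) (s : seq 'I_m) (i : 'I_m) : Prop :=
  i \in s \/ exists s0 t, s = s0 ++ t /\
    mcm m A M s0 (i |: Bset m A M i) = (mcm m A M s0 (Bset m A M i)).+1.

Lemma served_cat M s t i : served M s i -> served M (s ++ t) i.
Proof.
case=> [i_s | [s0 [u [-> gain]]]]; first by left; rewrite mem_cat i_s.
by right; exists s0, (u ++ t); rewrite catA.
Qed.

Lemma umcd_from_served M N s k : umcd_from m A M N s k ->
  N \subset M -> all (mem M) s -> {in M, forall i, i \notin N -> served M s i} ->
  exists s', [/\ size s' = k, all (mem M) s' & {in M, forall i, served M s' i}].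
Proof.
elim=> {N s k} [s | N s w k wN _ _ IH] NM sM s_served.
  by exists s; split=> // i iM; apply: s_served; rewrite ?inE.
apply: IH.
- apply/fintype.subsetP => i; rewrite inE => /andP [/setD1P [_ iN] _].
  exact: (fintype.subsetP NM).
- by rewrite all_rcons sM andbT; apply: (fintype.subsetP NM).
move=> i iM; rewrite inE => i_removed.
case: (boolP (i \in N)) => iN; last by rewrite -cats1; apply/served_cat/s_served.
case: (i =P w) => [-> | /eqP i_neq_w]; first by left; rewrite mem_rcons mem_head.
right; exists (rcons s w), [::]; rewrite cats0; split=> //; apply/eqP.
by move: i_removed; rewrite in_setD1 i_neq_w iN negbK.
Qed.

Lemma umcd_run_served M k : umcd_run m A M k ->
  exists s, [/\ size s = k, all (mem M) s & {in M, forall i, served M s i}].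
Proof.
by move=> run; apply: (umcd_from_served run) => // i ->.
Qed.

Lemma served_pmcm_gain M s i : served M s i ->
  exists Rw, pmcm (umcd_pattern M s) Rw (Bset m A M i) <
             pmcm (umcd_pattern M s) Rw (i |: Bset m A M i).
Proof.
case=> [i_s | [s0 [t [-> gain]]]]; last first.
  by exists (fun r => r < size s0); rewrite -!mcm_cat gain.
pose r0 : 'I_(size s) := Ordinal (etrans (index_mem i s) i_s).
have row_r0 : Grow m A M s r0 = i |: (A i :&: M) by rewrite /Grow (tnth_nth i) nth_index.
(* Row r0 meets column i but no column of B_i. *)
exists (pred1 r0); apply: (@leq_trans 1).
  rewrite ltnS; apply/bigmax_leqP => T /andP [/andP [/forall_inP T_pat _] /forall_inP T_on].
  rewrite leqn0 cards_eq0; apply/eqP/setP => p; rewrite inE; apply/negP => pT.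
  have /andP [/eqP p_r0 pB] := T_on p pT; move: (T_pat p pT) pB.
  rewrite /umcd_pattern p_r0 row_r0 !inE.
  by case/orP => [-> | /andP [-> ->]]; rewrite ?orbT.
apply: leq_trans (leq_bigmax_cond [set (r0, i)] _); first by rewrite cards1.
rewrite /pmatching_on /pmatching -!andbA; apply/and3P; split.
- by apply/forall_inP => p /set1P -> /=; rewrite /umcd_pattern row_r0 setU11.
- by apply/forall_inP => p /set1P ->; apply/forall_inP => q /set1P ->; rewrite eqxx.
- by apply/forall_inP => p /set1P -> /=; rewrite eqxx setU11.
Qed.

End Umcd.

Arguments umcd_pattern {m} A M s r c.

Section UmcdLinearCode.
Local Open Scope ring_scope.
Variables (m : nat) (A : 'I_m -> {set 'I_m}).

(* Receiver i recovers x_i from E x and (x_j)_{j in A i}. *)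
Definition linear_decodes (R : pzRingType) r (E : 'M[R]_(r, m)) (i : 'I_m) : Prop :=
  forall d : 'cV[R]_m, (E *m d = 0) ->
    (forall j, j \in A i -> d j 0 = 0) -> d i 0 = 0.

Lemma served_linear_decodes (R : idomainType) (M : {set 'I_m}) (s : seq 'I_m)
    (G : 'M[R]_(size s, m)) :
  all (mem M) s -> (forall r c, ~~ umcd_pattern A M s r c -> G r c = 0) ->
  (forall S, pmatching (umcd_pattern A M s) S -> (\det (minor G S) != 0)) ->
  {in M, forall i, served A M s i -> linear_decodes G i}.
Proof.
move=> sM G_pat G_gen i iM /served_pmcm_gain [Rw gain] d Gd0 dA.
have G_outM r c : c \notin M -> G r c = 0.
  move=> cM; apply: G_pat; apply: contra cM.
  rewrite /umcd_pattern /Grow !inE => /orP [/eqP -> | /andP [_ //]].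
  by apply: (allP sM); apply: mem_tnth.
pose dM := \col_j (if j \in M then d j 0 else 0).
have GdM0 : (G *m dM = 0).
  rewrite -Gd0; apply/matrixP => r z; rewrite ord1 !mxE; apply: eq_bigr => j _; rewrite mxE.
  by case: (boolP (j \in M)) => // jM; rewrite G_outM ?mul0r.
have iNB : i \notin Bset m A M i by rewrite !inE eqxx.
suff : dM i 0 = 0 by rewrite mxE iM.
apply: (generic_kernel_coord_eq0 G_pat G_gen iNB gain GdM0) => j.
rewrite mxE !inE; case: (boolP (j \in M)) => // jM.
by rewrite andbT negb_or negbK => /andP [/negbTE -> /dA].
Qed.

Lemma umcd_linear_code (F : finFieldType) (M : {set 'I_m}) k :
  umcd_run m A M k -> (generic_bound k m < #|F|)%N ->
  exists E : 'M[F]_(k, m), {in M, forall i, linear_decodes E i}.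
Proof.
move=> /umcd_run_served [s [<- sM s_served]] F_large.
have [G [G_pat G_gen]] := generic_matrix_exists (umcd_pattern A M s) F_large.
exists G => i iM; exact (served_linear_decodes sM G_pat G_gen iM (s_served i iM)).
Qed.

End UmcdLinearCode.

Section LinearIndexCode.
Local Open Scope ring_scope.
Variables (m : nat) (A : 'I_m -> {set 'I_m}) (F : finFieldType).

Lemma linear_decodes_col_mxl r1 r2 (E1 : 'M[F]_(r1, m)) (E2 : 'M[F]_(r2, m)) i :
  linear_decodes A E1 i -> linear_decodes A (col_mx E1 E2) i.
Proof.
by move=> dec d; rewrite mul_col_mx => /eqP; rewrite col_mx_eq0 => /andP [/eqP /dec].
Qed.

Lemma linear_decodes_col_mxr r1 r2 (E1 : 'M[F]_(r1, m)) (E2 : 'M[F]_(r2, m)) i :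
  linear_decodes A E2 i -> linear_decodes A (col_mx E1 E2) i.
Proof.
by move=> dec d; rewrite mul_col_mx => /eqP; rewrite col_mx_eq0 => /andP [_ /eqP /dec].
Qed.

Lemma big_col_mx_decodes (T : eqType) (l : seq T) (rk : T -> nat) (D : T -> {set 'I_m}) :
  (forall M, M \in l ->
     exists E : 'M[F]_(rk M, m), {in D M, forall i, linear_decodes A E i}) ->
  exists E : 'M[F]_(\sum_(M <- l) rk M, m),
    forall M, M \in l -> {in D M, forall i, linear_decodes A E i}.
Proof.
elim: l => [|M0 l IH] codes; first by exists 0 => M; rewrite in_nil.
have [E0 E0_dec] := codes M0 (mem_head _ _).
have [El El_dec] := IH (fun M Ml => codes M (@mem_behead _ (M0 :: l) M Ml)).
rewrite big_cons; exists (col_mx E0 El) => M; rewrite in_cons => /predU1P [-> | Ml] i iD.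
  exact/linear_decodes_col_mxl/E0_dec.
exact/linear_decodes_col_mxr/(El_dec M Ml).
Qed.

Lemma has_index_code_linear r (E : 'M[F]_(r, m)) :
  (forall i, linear_decodes A E i) -> has_index_code m A F 1 r.
Proof.
move=> dec; pose msg (x : 'I_m -> 'rV[F]_1) : 'cV[F]_m := \col_j x j 0 0.
pose consistent i (y : 'rV[F]_r) (side : {j | j \in A i} -> 'rV[F]_1) (z : 'cV[F]_m) :=
  ((E *m z)^T == y) && [forall j, z (val j) 0 == side j 0 0].
exists (fun x => (E *m msg x)^T).
exists (fun i y side =>
  if [pick z | consistent i y side z] is Some z then const_mx (z i 0) else 0).
move=> x i; case: pickP => [z /andP [/eqP Ez /forallP z_side] | no_z]; last first.
  have : consistent i (E *m msg x)^T (fun j => x (val j)) (msg x).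
    by rewrite /consistent eqxx; apply/forallP => j; rewrite mxE.
  by rewrite no_z.
have : (z - msg x) i 0 = 0.
  apply: dec => [|j jA]; first by rewrite mulmxBr (trmx_inj Ez) subrr.
  by rewrite !mxE (eqP (z_side (exist _ j jA))) subrr.
rewrite !mxE => /eqP; rewrite subr_eq0 => /eqP ->.
by apply/matrixP => a b; rewrite !ord1 mxE.
Qed.

Lemma beta_le_scalar_code (R : realType) r :
  has_index_code m A F 1 r -> (beta m A R <= r%:R)%R.
Proof.
move=> code; apply: ge_inf; last by exists F, 1%N, r; rewrite divr1.
by exists 0 => _ [F' [t [r' [_ _ ->]]]]; rewrite divr_ge0.
Qed.

End LinearIndexCode.

Lemma partition_singleton_partition m : finset.partition (singleton_partition m) [set: 'I_m].
Proof.
apply/and3P; split.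
- apply/eqP/setP => x; rewrite inE; apply/bigcupP; exists [set x]; last exact: set11.
  exact: imset_f.
- apply/finset.trivIsetP => _ _ /imsetP [a _ ->] /imsetP [b _ ->] ab.
  by rewrite disjoints1 inE; apply: contraNneq ab => ->.
- by apply/imsetP => -[a _ /setP /(_ a)]; rewrite !inE eqxx.
Qed.

Theorem theorem6 (R : realType) (m : nat) (A : 'I_m -> {set 'I_m})
    (hA : forall i : 'I_m, i \notin A i)
    (exec : {set 'I_m} -> nat)
    (hexec : forall M : {set 'I_m}, umcd_run m A M (exec M)) :
  (beta m A R <= (pumcd m exec)%:R)%R.
Proof.
rewrite /pumcd; case: arg_minnP => [|P P_part _]; first exact: partition_singleton_partition.
have [p p_large p_prime] := prime_above (\max_(M : {set 'I_m}) generic_bound (exec M) m).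
have F_large M : generic_bound (exec M) m < #|'F_p|.
  by rewrite card_Fp //; apply: leq_ltn_trans (leq_bigmax M) p_large.
have [E E_dec] := big_col_mx_decodes (l := enum P) (D := id)
  (fun M _ => umcd_linear_code (hexec M) (F_large M)).
apply/beta_le_scalar_code; rewrite -big_enum; apply: has_index_code_linear => i.
have : i \in finset.cover P by case/and3P: P_part => /eqP ->; rewrite inE.
by case/bigcupP => M MP iM; apply: E_dec iM; rewrite mem_enum.
Qed.
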